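(* Let $g:\mathbb{R}^m\to\overline{\mathbb{R}}$ be a polyhedral function and $(\bar z,\bar\lambda)\in\mathrm{gph}\,\partial g$. Then $\bar\lambda\in\mathrm{ri}\,\partial g(\bar z)$ if and only if $$D(\partial g)(\bar z,\bar\lambda)(w)=D^*(\partial g)(\bar z,\bar\lambda)(w)\quad\text{for all } w\in\mathbb{R}^m.$$
   Context: A proper function $g:\mathbb{R}^m\to\overline{\mathbb{R}}$ is polyhedral if its epigraph is a polyhedral convex set; $\partial g$ is the convex-analysis subdifferential; $\mathrm{ri}$ is relative interior. For a set $\Omega$ and $\bar x\in\Omega$: $T_\Omega(\bar x)=\limsup_{t\searrow0}(\Omega-\bar x)/t$ (Painlevé–Kuratowski outer limit), $\widehat N_\Omega(\bar x)=T_\Omega(\bar x)^*$ (polar), and the limiting normal cone $N_\Omega(\bar x)$ is the set of $\bar v$ such that there exist $x^k\to\bar x$ in $\Omega$ and $v^k\to\bar v$ with $v^k\in\widehat N_\Omega(x^k)$. The graphical derivative is defined by $u\in D(\partial g)(\bar z,\bar\lambda)(w)\iff(w,u)\in T_{\mathrm{gph}\,\partial g}(\bar z,\bar\lambda)$, and the coderivative by $u\in D^*(\partial g)(\bar z,\bar\lambda)(w)\iff(u,-w)\in N_{\mathrm{gph}\,\partial g}(\bar z,\bar\lambda)$. *)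

From HB Require Import structures.
From mathcomp Require Import all_boot all_order all_algebra.
From mathcomp Require Import all_classical all_reals all_analysis.
Set Implicit Arguments. Unset Strict Implicit. Unset Printing Implicit Defensive.
Import Order.TTheory GRing.Theory Num.Theory.
Import numFieldNormedType.Exports.
Local Open Scope classical_set_scope.
Local Open Scope ring_scope.

Section Defs.
Variable R : realType.

Definition dotv (n : nat) (u v : 'rV[R]_n) : R := \sum_(i < n) u ord0 i * v ord0 i.

Definition polyhedral_set (n : nat) (S : set 'rV[R]_n) : Prop :=
  exists (k : nat) (A : 'M[R]_(k, n)) (b : 'cV[R]_k),
    S = [set x | forall i : 'I_k, \sum_(j < n) A i j * x ord0 j <= b i ord0].

Definition epigraph (m : nat) (g : 'rV[R]_m -> \bar R) : set 'rV[R]_(m + 1) :=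
  [set p | (g (lsubmx p) <= (rsubmx p ord0 ord0)%:E)%E].

Definition proper_fun (m : nat) (g : 'rV[R]_m -> \bar R) : Prop :=
  (forall x, g x != -oo%E) /\ (exists x, g x != +oo%E).

Definition polyhedral_fun (m : nat) (g : 'rV[R]_m -> \bar R) : Prop :=
  proper_fun g /\ polyhedral_set (epigraph g).

Definition subdiff (m : nat) (g : 'rV[R]_m -> \bar R) (z : 'rV[R]_m) : set 'rV[R]_m :=
  [set v | g z \is a fin_num /\
           forall x, (g z + (dotv v (x - z))%:E <= g x)%E].

Definition aff_hull (n : nat) (C : set 'rV[R]_n) : set 'rV[R]_n :=
  [set y | exists (k : nat) (c : 'I_k -> 'rV[R]_n) (mu : 'I_k -> R),
     (forall i, C (c i)) /\ \sum_(i < k) mu i = 1 /\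
     y = \sum_(i < k) mu i *: c i].

Definition ri (n : nat) (C : set 'rV[R]_n) : set 'rV[R]_n :=
  [set x | C x /\ exists e : R, 0 < e /\ (ball x e `&` aff_hull C) `<=` C].

Definition outer_limit_0 (n : nat) (S : R -> set 'rV[R]_n) : set 'rV[R]_n :=
  [set w | exists (t : nat -> R) (wk : nat -> 'rV[R]_n),
     (forall k, 0 < t k) /\ t @ \oo --> 0 /\ wk @ \oo --> w /\
     (forall k, S (t k) (wk k))].

Definition tangent_cone (n : nat) (O : set 'rV[R]_n) (xb : 'rV[R]_n) : set 'rV[R]_n :=
  outer_limit_0 (fun t => [set w | O (xb + t *: w)]).

Definition polar (n : nat) (K : set 'rV[R]_n) : set 'rV[R]_n :=
  [set v | forall w, K w -> dotv v w <= 0].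

Definition reg_normal_cone (n : nat) (O : set 'rV[R]_n) (xb : 'rV[R]_n) : set 'rV[R]_n :=
  polar (tangent_cone O xb).

Definition lim_normal_cone (n : nat) (O : set 'rV[R]_n) (xb : 'rV[R]_n) : set 'rV[R]_n :=
  [set v | O xb /\ exists (x : nat -> 'rV[R]_n) (vk : nat -> 'rV[R]_n),
     (forall k, O (x k)) /\ x @ \oo --> xb /\ vk @ \oo --> v /\
     (forall k, reg_normal_cone O (x k) (vk k))].

Definition gph (m : nat) (F : 'rV[R]_m -> set 'rV[R]_m) : set 'rV[R]_(m + m) :=
  [set p | F (lsubmx p) (rsubmx p)].

Definition graph_deriv (m : nat) (F : 'rV[R]_m -> set 'rV[R]_m) (z l w : 'rV[R]_m)
  : set 'rV[R]_m :=
  [set u | tangent_cone (gph F) (row_mx z l) (row_mx w u)].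

Definition coderiv (m : nat) (F : 'rV[R]_m -> set 'rV[R]_m) (z l w : 'rV[R]_m)
  : set 'rV[R]_m :=
  [set u | lim_normal_cone (gph F) (row_mx z l) (row_mx u (- w))].

End Defs.

(* Near (zb, g zb) the epigraph of g coincides with its tangent cone, cut out
   by the active constraints p r . y + q r s <= 0.  Hence a subgradient l at
   zb + w is a subgradient at zb as soon as w, lb . w and l . w are small, and
   subdiff g zb is a polyhedron around lb spanned by the vectors
   v r = p r + q r lb of the active constraints; let M be their span.
   If lb is in the relative interior, the graph of subdiff g coincides near
   (zb, lb) with (zb + M^perp) x (lb + M), so its tangent cone is M^perp x M and
   its regular and limiting normal cones are M x M^perp: D and D^* agree.
   Conversely (-v r, 0) is a regular normal to the graph at (zb, lb + t v r) for
   small t > 0, so -v r lies in D^*(0) = D(0), which Farkas' lemma puts in the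
   cone generated by the v s.  That cone is then the whole span M, and lb is in
   the relative interior. *)

From HB Require Import structures.
From mathcomp Require Import all_boot all_order all_algebra.
From mathcomp Require Import all_classical all_reals all_analysis.
From mathcomp Require Import ring lra.
Import Order.TTheory GRing.Theory Num.Theory.
Import numFieldNormedType.Exports.
Local Open Scope classical_set_scope.
Local Open Scope ring_scope.
Set Implicit Arguments. Unset Strict Implicit. Unset Printing Implicit Defensive.

Section InnerProduct.
Variable R : realType.

Lemma dotvC n (u v : 'rV[R]_n) : dotv u v = dotv v u.
Proof. by apply: eq_bigr => i _; rewrite mulrC. Qed.

Lemma dotvDl n (u v w : 'rV[R]_n) : dotv (u + v) w = dotv u w + dotv v w.
Proof. by rewrite /dotv -big_split; apply: eq_bigr => i _; rewrite mxE mulrDl. Qed.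

Lemma dotvZl n a (u w : 'rV[R]_n) : dotv (a *: u) w = a * dotv u w.
Proof. by rewrite /dotv mulr_sumr; apply: eq_bigr => i _; rewrite mxE mulrA. Qed.

Lemma dotvNl n (u w : 'rV[R]_n) : dotv (- u) w = - dotv u w.
Proof. by rewrite -scaleN1r dotvZl mulN1r. Qed.

Lemma dotvBl n (u v w : 'rV[R]_n) : dotv (u - v) w = dotv u w - dotv v w.
Proof. by rewrite dotvDl dotvNl. Qed.

Lemma dotv0l n (w : 'rV[R]_n) : dotv 0 w = 0.
Proof. by rewrite -(scale0r 0) dotvZl mul0r. Qed.

Lemma dotvDr n (u v w : 'rV[R]_n) : dotv w (u + v) = dotv w u + dotv w v.
Proof. by rewrite !(dotvC w) dotvDl. Qed.

Lemma dotvZr n a (u w : 'rV[R]_n) : dotv w (a *: u) = a * dotv w u.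
Proof. by rewrite !(dotvC w) dotvZl. Qed.

Lemma dotvNr n (u w : 'rV[R]_n) : dotv w (- u) = - dotv w u.
Proof. by rewrite !(dotvC w) dotvNl. Qed.

Lemma dotvBr n (u v w : 'rV[R]_n) : dotv w (u - v) = dotv w u - dotv w v.
Proof. by rewrite dotvDr dotvNr. Qed.

Lemma dotv0r n (w : 'rV[R]_n) : dotv w 0 = 0.
Proof. by rewrite dotvC dotv0l. Qed.

Lemma dotv_row_mx n1 n2 (a c : 'rV[R]_n1) (b d : 'rV[R]_n2) :
  dotv (row_mx a b) (row_mx c d) = dotv a c + dotv b d.
Proof.
by rewrite /dotv big_split_ord; congr (_ + _); apply: eq_bigr => i _;
  rewrite ?row_mxEl ?row_mxEr.
Qed.

Lemma dotv_suml n p (s : 'I_p -> R) (v : 'I_p -> 'rV[R]_n) y :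
  dotv (\sum_(i < p) s i *: v i) y = \sum_(i < p) s i * dotv (v i) y.
Proof.
elim: p s v => [|p IH] s v; first by rewrite !big_ord0 dotv0l.
by rewrite !big_ord_recr /= dotvDl IH dotvZl.
Qed.

Lemma dotv_mulmx_col n p (a : 'rV[R]_n) (C : 'M[R]_(n, p)) j :
  dotv a (col j C)^T = (a *m C) 0 j.
Proof. by rewrite /dotv !mxE; apply: eq_bigr => i _; rewrite !mxE. Qed.

Lemma dotv_gt0 n (u : 'rV[R]_n) : u != 0 -> 0 < dotv u u.
Proof.
move=> u0; have sq_ge0 i : 0 <= u 0 i * u 0 i by rewrite -expr2 sqr_ge0.
rewrite lt0r sumr_ge0 ?andbT //; apply: contra u0 => /eqP /psumr_eq0P u2_0.
apply/eqP/rowP => j; rewrite mxE; apply/eqP.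
by rewrite -sqrf_eq0 expr2 u2_0.
Qed.

Lemma normr_entry_le m n (x : 'M[R]_(m, n)) i j : `|x i j| <= `|x|.
Proof.
have -> : `|x| = mx_norm x by [].
by rewrite mx_normrE; apply/bigmax_geP; right; exists (i, j).
Qed.

Lemma normr_mx_le m n (x : 'M[R]_(m, n)) c : 0 <= c ->
  (forall i j, `|x i j| <= c) -> `|x| <= c.
Proof.
move=> c0 xc; have -> : `|x| = mx_norm x by [].
by rewrite mx_normrE; apply: bigmax_le => // -[i j].
Qed.

Lemma normr_dotv_le n (a w : 'rV[R]_n) :
  `|dotv a w| <= (\sum_(j < n) `|a 0 j|) * `|w|.
Proof.
rewrite /dotv mulr_suml; apply: (le_trans (ler_norm_sum _ _ _)).
apply: ler_sum => j _; rewrite normrM; apply: ler_wpM2l => //.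
exact: normr_entry_le.
Qed.

End InnerProduct.

Section Convergence.
Variable R : realType.
Context {T : Type} {F : set_system T} {FF : Filter F}.

Lemma cvg_mxE m n (f : T -> 'M[R]_(m, n)) (x : 'M[R]_(m, n)) i j :
  f @ F --> x -> (fun t => f t i j) @ F --> x i j.
Proof.
move=> /cvgrPdist_lt fx; apply/cvgrPdist_lt => e e0; near=> t.
have := normr_entry_le (x - f t) i j; rewrite !mxE => /le_lt_trans; apply.
by near: t; exact: fx.
Unshelve. all: by end_near. Qed.

Lemma cvg_mx_entries m n (f : T -> 'M[R]_(m, n)) (x : 'M[R]_(m, n)) :
  (forall i j, (fun t => f t i j) @ F --> x i j) -> f @ F --> x.
Proof.
move=> fx; apply/cvgrPdist_lt => e e0.
have e2 : 0 < e / 2 by lra.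
have : \forall t \near F, forall ij : 'I_m * 'I_n,
    `|x ij.1 ij.2 - f t ij.1 ij.2| < e / 2.
  by apply: filter_forall => -[i j]; exact: (cvgrPdist_lt _ _).1 (fx i j) _ e2.
apply: filterS => t xft; apply: (@le_lt_trans _ _ (e / 2)); last lra.
apply: normr_mx_le; first lra.
by move=> i j; rewrite !mxE; apply: ltW; exact: (xft (i, j)).
Qed.

Lemma cvg_dotv n (a b : T -> 'rV[R]_n) (a' b' : 'rV[R]_n) :
  a @ F --> a' -> b @ F --> b' ->
  (fun t => dotv (a t) (b t)) @ F --> dotv a' b'.
Proof.
move=> aa' bb'; apply: cvg_big => [|i _]; first exact: add_continuous.
by apply: cvgM; exact: cvg_mxE.
Qed.

Lemma cvg_add_scale_vanish n (t : T -> R) (f : T -> 'rV[R]_n) (x0 f' : 'rV[R]_n) :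
  t @ F --> 0 -> f @ F --> f' -> (fun s => x0 + t s *: f s) @ F --> x0.
Proof.
move=> t0 ff'; rewrite -[X in _ --> X]addr0 -(scale0r f').
by apply: cvgD; [exact: cvg_cst | exact: cvgZ].
Qed.

Lemma cvg_lsubmx n1 n2 (f : T -> 'rV[R]_(n1 + n2)) (x : 'rV[R]_(n1 + n2)) :
  f @ F --> x -> (fun t => lsubmx (f t)) @ F --> lsubmx x.
Proof.
move=> fx; apply: cvg_mx_entries => i j; rewrite mxE.
by under eq_fun do rewrite mxE; exact: cvg_mxE.
Qed.

Lemma cvg_rsubmx n1 n2 (f : T -> 'rV[R]_(n1 + n2)) (x : 'rV[R]_(n1 + n2)) :
  f @ F --> x -> (fun t => rsubmx (f t)) @ F --> rsubmx x.
Proof.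
move=> fx; apply: cvg_mx_entries => i j; rewrite mxE.
by under eq_fun do rewrite mxE; exact: cvg_mxE.
Qed.

Lemma cvg_row_mx n1 n2 (a : T -> 'rV[R]_n1) (b : T -> 'rV[R]_n2)
    (a' : 'rV[R]_n1) (b' : 'rV[R]_n2) :
  a @ F --> a' -> b @ F --> b' ->
  (fun t => row_mx (a t) (b t)) @ F --> row_mx a' b'.
Proof.
move=> aa' bb'; apply: cvg_mx_entries => i j.
rewrite -[j](@splitK n1 n2); case: (fintype.split j) => k /=.
- by rewrite row_mxEl; under eq_fun do rewrite row_mxEl; exact: cvg_mxE.
- by rewrite row_mxEr; under eq_fun do rewrite row_mxEr; exact: cvg_mxE.
Qed.

End Convergence.

Section Farkas.
Variable R : realType.

Lemma conic_comb_recr m n (v : 'I_n.+1 -> 'rV[R]_m) (s : 'I_n -> R) c :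
  (forall i, 0 <= s i) -> 0 <= c ->
  exists2 s' : 'I_n.+1 -> R, (forall i, 0 <= s' i) &
    \sum_(i < n.+1) s' i *: v i =
    \sum_(i < n) s i *: v (widen_ord (leqnSn n) i) + c *: v ord_max.
Proof.
move=> s0 c0; exists (fun i => if unlift ord_max i is Some j then s j else c).
  by move=> i; case: (unlift ord_max i).
rewrite big_ord_recr /= unlift_none; congr (_ + _); apply: eq_bigr => j _.
suff -> : widen_ord (leqnSn n) j = lift ord_max j by rewrite liftK.
by apply: val_inj; rewrite [RHS]lift_max.
Qed.

(* Fourier-Motzkin: the last generator is eliminated by projecting along it
   when it makes a positive angle with the separating direction. *)
Lemma farkas m n (v : 'I_n -> 'rV[R]_m) (u : 'rV[R]_m) :
  (exists2 s : 'I_n -> R, (forall i, 0 <= s i) & u = \sum_(i < n) s i *: v i) \/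
  (exists2 y, (forall i, dotv (v i) y <= 0) & 0 < dotv u y).
Proof.
elim: n v u => [|n IH] v u.
  have [->|u0] := eqVneq u 0; first by left; exists (fun=> 0); rewrite ?big_ord0.
  by right; exists u => [[]//|]; exact: dotv_gt0.
pose v' j := v (widen_ord (leqnSn n) j); pose vn := v ord_max.
have v'E i : (exists j, i = widen_ord (leqnSn n) j) \/ i = ord_max.
  case: (unliftP ord_max i) => [j ->|->]; last by right.
  by left; exists j; apply: val_inj; rewrite [LHS]lift_max.
have [[s s0 ->]|[y v'y uy]] := IH v' u.
  left; have [s' s'0 e] := conic_comb_recr v s0 (lexx 0).
  by exists s'; rewrite // e scale0r addr0.
have [vny|vny] := leP (dotv vn y) 0.
  by right; exists y => // i; case: (v'E i) => [[j ->]|->]; [exact: v'y|].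
set b := dotv vn y; have b0 : b != 0 by rewrite gt_eqF.
pose proj x := x - (dotv x y / b) *: vn.
have [[s s0 us]|[y' v'y' uy']] := IH (proj \o v') (proj u).
  left; pose c := dotv u y / b - \sum_(j < n) s j * (dotv (v' j) y / b).
  have c0 : 0 <= c.
    rewrite subr_ge0; apply: (@le_trans _ _ 0).
      rewrite -oppr_ge0 -sumrN; apply: sumr_ge0 => j _; rewrite oppr_ge0.
      by apply: mulr_ge0_le0; rewrite ?pmulr_lle0 ?invr_gt0 ?v'y.
    by apply: divr_ge0 => //; exact: ltW.
  have [s' s'0 e] := conic_comb_recr v s0 c0; exists s' => //; rewrite e.
  rewrite -[u](subrK ((dotv u y / b) *: vn)) -/(proj u) us /c /=.
  under eq_bigr do rewrite scalerBr scalerA.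
  by rewrite sumrB scalerBl -scaler_suml addrA addrAC.
right; exists (y' - (dotv vn y' / b) *: y).
  move=> i; case: (v'E i) => [[j ->]|->].
    have := v'y' j; rewrite /= /proj dotvBl dotvZl !dotvBr !dotvZr.
    by congr (_ <= _); field.
  by rewrite dotvBr dotvZr -/vn -/b divfK // subrr.
move: uy'; rewrite /proj dotvBl dotvZl dotvBr dotvZr (dotvC vn y').
by congr (_ < _); field.
Qed.

End Farkas.

Section RowSpace.
Variables (R : realType) (k m : nat) (v : 'I_k -> 'rV[R]_m).
Let V := \matrix_(r < k) v r.

Lemma dotv_sub_perp u w : (u <= V)%MS -> (forall r, dotv (v r) w = 0) ->
  dotv u w = 0.
Proof.
move=> /submxP [D ->] vw; rewrite mulmx_sum_row dotv_suml big1 // => r _.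
by rewrite rowK vw mulr0.
Qed.

Lemma sub_of_perp u :
  (forall w, (forall r, dotv (v r) w = 0) -> dotv u w = 0) -> (u <= V)%MS.
Proof.
move=> uV; rewrite submxE; apply/eqP/rowP => j; rewrite [RHS]mxE.
rewrite -dotv_mulmx_col; apply: uV => r.
by rewrite -rowK dotv_mulmx_col -row_mul mulmx_coker !mxE.
Qed.

Lemma max0_sub_max0N (x : R) : Num.max x 0 - Num.max (- x) 0 = x.
Proof.
have [x0|x0] := leP 0 x.
  by rewrite [Num.max (- x) 0]max_r ?max_l ?subr0 // oppr_le0.
by rewrite [Num.max (- x) 0]max_l ?max_r ?sub0r ?opprK // ?oppr_ge0 ltW.
Qed.

Lemma span_coords_bounded : exists2 a : 'I_k -> R, (forall s, 0 <= a s) &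
  forall u, (u <= V)%MS -> exists2 be : 'I_k -> R,
    (forall s, `|be s| <= a s * `|u|) & u = \sum_(s < k) be s *: v s.
Proof.
exists (fun s => \sum_(i < m) `|pinvmx V i s|) => [s|u uV]; first exact: sumr_ge0.
exists (fun s => (u *m pinvmx V) 0 s) => [s|].
  rewrite -dotv_mulmx_col dotvC; apply: le_trans (normr_dotv_le _ _) _.
  by apply: ler_wpM2r => //; apply: ler_sum => i _; rewrite !mxE.
rewrite -[u in LHS](mulmxKpV uV) mulmx_sum_row.
by apply: eq_bigr => s _; rewrite rowK.
Qed.

(* If every -v r is a conic combination of the v s, then the conic hull of
   the v s is their span: split coordinates into positive and negative parts. *)
Lemma conic_span_bounded :
  (forall r, exists2 rho : 'I_k -> R, (forall s, 0 <= rho s) &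
     - v r = \sum_(s < k) rho s *: v s) ->
  exists2 C : R, 0 <= C & forall u, (u <= V)%MS ->
    exists2 sg : 'I_k -> R, (forall s, 0 <= sg s /\ sg s <= C * `|u|) &
      u = \sum_(s < k) sg s *: v s.
Proof.
move=> conicN; have /choice [rho rhoP] : forall r, exists rho : 'I_k -> R,
    (forall s, 0 <= rho s) /\ - v r = \sum_(s < k) rho s *: v s.
  by move=> r; have [rho ? ?] := conicN r; exists rho.
have rho0 r s : 0 <= rho r s by case: (rhoP r).
have [a a0 coords] := span_coords_bounded.
pose c s := a s + \sum_(r < k) a r * rho r s.
have c0 s : 0 <= c s by rewrite addr_ge0 ?sumr_ge0 // => r _; rewrite mulr_ge0.
exists (\sum_(s < k) c s) => [|u /coords [be beb ube]]; first exact: sumr_ge0.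
pose pos (x : R) := Num.max x 0; pose neg (x : R) := Num.max (- x) 0.
have pos_le s : 0 <= pos (be s) <= a s * `|u|.
  by rewrite le_max lexx orbT ge_max (le_trans (ler_norm _) (beb s)) mulr_ge0.
have neg_le s : 0 <= neg (be s) <= a s * `|u|.
  rewrite le_max lexx orbT ge_max mulr_ge0 // andbT.
  by rewrite (le_trans _ (beb s)) // -normrN ler_norm.
exists (fun s => pos (be s) + \sum_(r < k) neg (be r) * rho r s) => [s|].
  have /andP[ps psa] := pos_le s; split.
    rewrite addr_ge0 ?sumr_ge0 // => r _.
    by case/andP: (neg_le r) => ? _; rewrite mulr_ge0.
  apply: (@le_trans _ _ (c s * `|u|)); last first.
    by rewrite ler_wpM2r // (bigD1 s) //= lerDl sumr_ge0.
  rewrite mulrDl [X in _ <= _ + X]mulr_suml lerD // ler_sum // => r _.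
  by rewrite mulrAC ler_wpM2r //; case/andP: (neg_le r).
under eq_bigr do rewrite scalerDl.
rewrite big_split /=; under [X in _ + X]eq_bigr do rewrite scaler_suml.
rewrite exchange_big /=.
under [X in _ + X]eq_bigr do under eq_bigr do rewrite -scalerA.
under [X in _ + X]eq_bigr do rewrite -scaler_sumr -(proj2 (rhoP _)).
rewrite ube -big_split; apply: eq_bigr => s _ /=.
by rewrite scalerN -scalerBl max0_sub_max0N.
Qed.

End RowSpace.

Section Preliminaries.
Variable R : realType.

Lemma addrKl (V : zmodType) (x y : V) : x + y - x = y.
Proof. by rewrite addrC addKr. Qed.

Lemma cvg_eq_near_cst {T} {F : set_system T} {FF : ProperFilter F}
    (f : T -> R) l c :
  f @ F --> l -> (\forall t \near F, f t = c) -> l = c.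
Proof.
move=> fl fc; apply/eqP; rewrite eq_le (cvgr_to_le fl) ?(cvgr_to_ge fl) //;
  by apply: filterS fc => t ->.
Qed.

Lemma small_multiple (eps c : R) : 0 < eps ->
  exists2 th : R, 0 < th & forall t, 0 <= t -> t <= th -> t * c < eps.
Proof.
move=> eps0; have c1 : 0 < `|c| + 1 by rewrite ltr_wpDl.
exists (eps / (`|c| + 1)) => [|t t0 tth]; first exact: divr_gt0.
apply: (le_lt_trans (ler_wpM2l t0 (ler_norm c))).
apply: (@le_lt_trans _ _ (eps / (`|c| + 1) * `|c|)); first exact: ler_wpM2r.
by rewrite mulrAC ltr_pdivrMr // ltr_pM2l //; lra.
Qed.

End Preliminaries.

Section GraphCones.
Variable R : realType.

Lemma subdiff_monotone m (g : 'rV[R]_m -> \bar R) z1 z2 l1 l2 :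
  subdiff g z1 l1 -> subdiff g z2 l2 -> 0 <= dotv (l1 - l2) (z1 - z2).
Proof.
move=> [g1 l1g] [g2 l2g]; have := l1g z2; have := l2g z1.
rewrite -(fineK g1) -(fineK g2) -!EFinD !lee_fin dotvBl !dotvBr; lra.
Qed.

Lemma gph_row_mx m (F : 'rV[R]_m -> set 'rV[R]_m) z l :
  gph F (row_mx z l) = F z l.
Proof. by rewrite /gph /= row_mxKl row_mxKr. Qed.

Lemma row_mx_addZ m n (z : 'rV[R]_m) (l : 'rV[R]_n) t (W : 'rV[R]_(m + n)) :
  row_mx z l + t *: W = row_mx (z + t *: lsubmx W) (l + t *: rsubmx W).
Proof. by rewrite -{1}[W]hsubmxK scale_row_mx add_row_mx. Qed.

Lemma tangent_cone_segment n (O : set 'rV[R]_n) Y W c : 0 < c ->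
  (forall t, 0 < t -> t <= c -> O (Y + t *: W)) -> tangent_cone O Y W.
Proof.
move=> c0 OYW; have t0 j : 0 < c * harmonic j by rewrite mulr_gt0 ?harmonic_gt0.
exists (fun j => c * harmonic j), (fun=> W); split; [by []|split; [|split]].
- by rewrite -(mulr0 c); apply: cvgMl_tmp; exact: cvg_harmonic.
- exact: cvg_cst.
move=> j; apply: OYW => //; rewrite ler_piMr ?(ltW c0) // /harmonic /=.
by rewrite invf_le1 ?ler1n // ltr0Sn.
Qed.

Lemma reg_normal_dotv_eq0 n (O : set 'rV[R]_n) Y N W :
  reg_normal_cone O Y N -> tangent_cone O Y W -> tangent_cone O Y (- W) ->
  dotv N W = 0.
Proof.
move=> ON /ON NW /ON; rewrite dotvNr oppr_le0 => NW'.
by apply/eqP; rewrite eq_le NW NW'.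
Qed.

Lemma polarZ n (K : set 'rV[R]_n) c x : 0 <= c -> polar K x -> polar K (c *: x).
Proof. by move=> c0 Kx w /Kx xw; rewrite dotvZl mulr_ge0_le0. Qed.

(* Monotonicity of the subdifferential against (z, l0) along a tangent curve. *)
Lemma subdiff_reg_normal m (g : 'rV[R]_m -> \bar R) z l0 l :
  subdiff g z l0 ->
  reg_normal_cone (gph (subdiff g)) (row_mx z l) (row_mx (l0 - l) 0).
Proof.
move=> l0_sub W [t [Wn [t0 [t_0 [WnW gph_n]]]]].
rewrite -[W]hsubmxK dotv_row_mx dotv0l addr0 -opprB dotvNl oppr_le0.
pose f j :=
  dotv (l - l0) (lsubmx (Wn j)) + t j * dotv (rsubmx (Wn j)) (lsubmx (Wn j)).
have : f @ \oo --> dotv (l - l0) (lsubmx W) + 0 * dotv (rsubmx W) (lsubmx W).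
  apply: cvgD; first by apply: cvg_dotv (cvg_cst _) (cvg_lsubmx WnW).
  by apply: cvgM => //; apply: cvg_dotv; [exact: cvg_rsubmx | exact: cvg_lsubmx].
rewrite mul0r addr0 => /cvgr_to_ge; apply; apply: nearW => j.
have := gph_n j; rewrite /= row_mx_addZ gph_row_mx => /subdiff_monotone.
move=> /(_ _ _ l0_sub); rewrite addrKl dotvZr pmulr_rge0 // (addrAC l).
by rewrite dotvDl dotvZl.
Qed.

End GraphCones.

Section PolyhedralSubdifferential.
Variables (R : realType) (m k : nat) (g : 'rV[R]_m -> \bar R).
Variables (p : 'I_k -> 'rV[R]_m) (q b : 'I_k -> R) (zb lb : 'rV[R]_m).
Hypothesis epiP : forall x t,
  (g x <= t%:E)%E <-> (forall i, dotv (p i) x + q i * t <= b i).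
Hypothesis g_neqNy : forall x, g x != -oo%E.
Hypothesis lb_subdiff : subdiff g zb lb.

Let gz := fine (g zb).

Lemma g_zbE : g zb = gz%:E.
Proof. by rewrite /gz fineK //; case: lb_subdiff. Qed.

Let active r := dotv (p r) zb + q r * gz == b r.

Let epi_tangent y s := forall r, active r -> dotv (p r) y + q r * s <= 0.

Lemma epi_zb r : dotv (p r) zb + q r * gz <= b r.
Proof. by apply: (epiP zb gz).1; rewrite g_zbE. Qed.

Lemma epi_tangent_of_epi y s :
  (g (zb + y) <= (gz + s)%:E)%E -> epi_tangent y s.
Proof.
move=> /epiP epi_ys r /eqP act_r; have := epi_ys r.
by rewrite dotvDr mulrDr; move: act_r; lra.
Qed.

Lemma epi_tangentZ y s t : 0 <= t -> epi_tangent y s -> epi_tangent (t *: y) (t * s).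
Proof.
move=> t0 ys r act_r; rewrite dotvZr mulrCA -mulrDr.
by apply: mulr_ge0_le0 => //; exact: ys.
Qed.

Lemma epi_tangentD y s y' s' :
  epi_tangent y s -> epi_tangent y' s' -> epi_tangent (y + y') (s + s').
Proof.
move=> ys ys' r act_r; rewrite dotvDr mulrDr.
by have := ys r act_r; have := ys' r act_r; lra.
Qed.

Lemma epi_tangent_small y s eps : 0 < eps -> epi_tangent y s ->
  exists th : R, [/\ 0 < th, `|th *: y| < eps, `|th * s| < eps &
                   epi_tangent (th *: y) (th * s)].
Proof.
move=> eps0 ys; have [th th0 th_small] := small_multiple (`|y| + `|s|) eps0.
exists th; split=> //; last exact: epi_tangentZ (ltW th0) ys.
all: have := th_small _ (ltW th0) (lexx _); rewrite ?normrZ ?normrM gtr0_norm //.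
all: by have := normr_ge0 y; have := normr_ge0 s; nra.
Qed.

(* Inactive constraints have positive slack, which absorbs small moves. *)
Lemma epi_of_epi_tangent : exists2 eps : R, 0 < eps & forall y s,
  `|y| < eps -> `|s| < eps -> epi_tangent y s -> (g (zb + y) <= (gz + s)%:E)%E.
Proof.
pose slack r := b r - (dotv (p r) zb + q r * gz).
pose C r := \sum_(j < m) `|p r 0 j| + `|q r|.
pose M := \big[Num.max/0]_(r < k) (if active r then 0 else (C r + 1) / slack r).
have M0 : 0 <= M by apply/bigmax_geP; left.
have slack0 r : ~~ active r -> 0 < slack r.
  by move=> inact; rewrite subr_gt0 lt_neqAle epi_zb andbT.
have C0 r : 0 <= C r by rewrite addr_ge0 ?sumr_ge0.
have CM r : ~~ active r -> C r + 1 <= M * slack r.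
  move=> inact; rewrite -ler_pdivrMr ?slack0 //.
  by apply/bigmax_geP; right; exists r => //; rewrite (negbTE inact).
have e0 : 0 < (1 + M)^-1 by rewrite invr_gt0; lra.
exists (1 + M)^-1 => // y s yl sl ys; apply/epiP => r.
have [act_r|inact] := boolP (active r).
  by have := ys r act_r; move: act_r => /eqP; rewrite dotvDr mulrDr; lra.
have ys_le : `|dotv (p r) y + q r * s| <= C r * (1 + M)^-1.
  apply: (le_trans (ler_normD _ _)); rewrite mulrDl; apply: lerD.
    apply: (le_trans (normr_dotv_le _ _)); apply: ler_wpM2l; last exact: ltW.
    exact: sumr_ge0.
  by rewrite normrM; apply: ler_wpM2l => //; exact: ltW.
have lt_slack : C r * (1 + M)^-1 < slack r.
  have e1 : (1 + M)^-1 * (1 + M) = 1 by rewrite mulVf //; lra.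
  by have := CM r inact; have := slack0 r inact; have := C0 r; nra.
have := ler_norm (dotv (p r) y + q r * s).
by rewrite dotvDr mulrDr /slack in lt_slack *; lra.
Qed.

Lemma subdiff_zbP l :
  subdiff g zb l <-> forall y s, epi_tangent y s -> dotv l y <= s.
Proof.
split=> [[_ l_sub] y s ys|l_polar].
  have [eps eps0 epi_near] := epi_of_epi_tangent.
  have [th [th0 ty ts ys']] := epi_tangent_small eps0 ys.
  have := l_sub (zb + th *: y); rewrite g_zbE addrKl -EFinD.
  move=> /le_trans /(_ (epi_near _ _ ty ts ys')).
  by rewrite lee_fin dotvZr lerD2l ler_pM2l.
split=> [|x]; first by case: lb_subdiff.
rewrite g_zbE; have := g_neqNy x; case g_x: (g x) => [t| |] // _; last exact: leey.
rewrite -EFinD lee_fin -lerBrDl; apply: l_polar; apply: epi_tangent_of_epi.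
by rewrite subrKC g_x lee_fin subrKC.
Qed.

Lemma subdiff_near_zb : exists2 eps : R, 0 < eps & forall w l,
  `|w| < eps -> `|dotv lb w| < eps -> `|dotv l w| < eps ->
  subdiff g (zb + w) l -> subdiff g zb l.
Proof.
have [eps eps0 epi_near] := epi_of_epi_tangent.
exists (eps / 2) => [|w l wl lbw lw [gw_fin l_sub]]; first lra.
pose S := fine (g (zb + w)) - gz.
have g_zbw : g (zb + w) = (gz + S)%:E by rewrite /S subrKC fineK.
have lbS : dotv lb w <= S.
  by case: lb_subdiff => _ /(_ (zb + w)); rewrite g_zbw g_zbE lee_fin addrKl lerD2l.
have Sl : S <= dotv l w.
  have := l_sub zb; rewrite g_zbw g_zbE lee_fin opprD addNKr dotvNr; lra.
have wS : epi_tangent w S by apply: epi_tangent_of_epi; rewrite g_zbw.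
apply/subdiff_zbP => y s ys.
have [th [th0 ty ts ys']] := epi_tangent_small (divr_gt0 eps0 (ltr0Sn _ 1)) ys.
have wy : `|w + th *: y| < eps by apply: le_lt_trans (ler_normD _ _) _; lra.
have Ss : `|S + th * s| < eps.
  apply: le_lt_trans (ler_normD _ _) _.
  suff : `|S| < eps / 2 by lra.
  by rewrite ltr_norml; move: lbw lw; rewrite !ltr_norml; lra.
have := epi_near _ _ wy Ss (epi_tangentD wS ys').
have := l_sub (zb + w + th *: y); rewrite g_zbw addrKl -addrA -!EFinD.
move=> /le_trans le1 /le1; rewrite lee_fin dotvZr [in X in _ <= X]addrA.
by rewrite lerD2l ler_pM2l.
Qed.

(* Inactive constraints get the zero generator, so generators stay indexed
   by 'I_k. *)
Let v r := if active r then p r + q r *: lb else 0.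
Let V := \matrix_(r < k) v r.
Let orthV w := forall r, dotv (v r) w = 0.

Lemma rowV r : row r V = v r.
Proof. exact: rowK. Qed.

Lemma orthVN w : orthV w -> orthV (- w).
Proof. by move=> wV r; rewrite dotvNr wV oppr0. Qed.

Lemma gen_dotv_le r y s : epi_tangent y s ->
  dotv (v r) y <= `|q r| * (s - dotv lb y).
Proof.
move=> ys; have /subdiff_zbP/(_ y s ys) lby := lb_subdiff.
rewrite /v; case: ifP => act_r; last by rewrite dotv0l mulr_ge0 ?subr_ge0.
have := ys r act_r; rewrite dotvDl dotvZl.
have : - q r <= `|q r| by rewrite -normrN ler_norm.
nra.
Qed.

Lemma epi_tangent_of_gen y : (forall r, dotv (v r) y <= 0) ->
  epi_tangent y (dotv lb y).
Proof. by move=> vy r act_r; have := vy r; rewrite /v act_r dotvDl dotvZl. Qed.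

Lemma subdiff_zb_dotv_le l y : subdiff g zb l ->
  (forall r, dotv (v r) y <= 0) -> dotv l y <= dotv lb y.
Proof. by move=> /subdiff_zbP l_polar /epi_tangent_of_gen; exact: l_polar. Qed.

Lemma subdiff_zb_conic (sg : 'I_k -> R) : (forall r, 0 <= sg r) ->
  \sum_(r < k) sg r * `|q r| <= 1 -> subdiff g zb (lb + \sum_(r < k) sg r *: v r).
Proof.
move=> sg0 sg1; apply/subdiff_zbP => y s ys.
have /subdiff_zbP/(_ y s ys) lby := lb_subdiff.
have : \sum_(r < k) sg r * dotv (v r) y <=
       (\sum_(r < k) sg r * `|q r|) * (s - dotv lb y).
  rewrite mulr_suml; apply: ler_sum => r _; rewrite -mulrA.
  by apply: ler_wpM2l => //; exact: gen_dotv_le.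
by rewrite dotvDl dotv_suml; nra.
Qed.

Lemma subdiff_zb_gen r : exists2 t : R, 0 < t &
  forall c, 0 <= c -> c <= t -> subdiff g zb (lb + c *: v r).
Proof.
have q0 := normr_ge0 (q r).
exists (1 + `|q r|)^-1 => [|c c0 ct]; first by rewrite invr_gt0 ltr_pwDl.
have cq : c * `|q r| <= 1.
  apply: le_trans (ler_wpM2r q0 ct) _.
  by rewrite mulrC ler_pdivrMr ?ltr_pwDl // mul1r lerDr.
apply/subdiff_zbP => y s ys.
have /subdiff_zbP/(_ y s ys) lby := lb_subdiff.
have := gen_dotv_le r ys; rewrite dotvDl dotvZl; nra.
Qed.

Lemma subdiff_zb_sub l : subdiff g zb l -> (l - lb <= V)%MS.
Proof.
move=> l_sub; apply: sub_of_perp => w wV; rewrite dotvBl.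
have le1 : dotv l w <= dotv lb w.
  by apply: subdiff_zb_dotv_le => // r; rewrite wV.
have : dotv l (- w) <= dotv lb (- w).
  by apply: subdiff_zb_dotv_le => // r; rewrite dotvNr wV oppr0.
by rewrite !dotvNr; lra.
Qed.

Lemma aff_hull_subdiff_zbE l : aff_hull (subdiff g zb) l <-> (l - lb <= V)%MS.
Proof.
split=> [[n [c [mu [c_sub [mu1 ->]]]]]|/submxP [D lD]].
  have -> : \sum_(i < n) mu i *: c i - lb = \sum_(i < n) mu i *: (c i - lb).
    rewrite -[lb in LHS]scale1r -mu1 scaler_suml -sumrB.
    by apply: eq_bigr => i _; rewrite scalerBr.
  by apply: summx_sub => i _; apply/scalemx_sub/subdiff_zb_sub.
have /choice [tau tauP] : forall r, exists t : R,
    0 < t /\ subdiff g zb (lb + t *: v r).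
  move=> r; have [t t0 tv] := subdiff_zb_gen r.
  by exists t; split=> //; exact: tv (ltW t0) (lexx t).
have tau0 r : 0 < tau r by case: (tauP r).
pose c (i : 'I_k.+1) := if unlift ord0 i is Some r then lb + tau r *: v r else lb.
pose X := \sum_(r < k) D 0 r / tau r.
pose mu (i : 'I_k.+1) := if unlift ord0 i is Some r then D 0 r / tau r else 1 - X.
exists k.+1, c, mu; split; [|split].
- by move=> i; rewrite /c; case: (unlift ord0 i) => [r|] //; case: (tauP r).
- rewrite big_ord_recl /mu unlift_none.
  by under eq_bigr do rewrite liftK; rewrite subrK.
rewrite big_ord_recl /mu /c unlift_none -[l](subrKC lb) lD mulmx_sum_row.
under [in RHS]eq_bigr do rewrite liftK scalerDr scalerA divfK ?gt_eqF ?tau0 // -rowV.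
by rewrite big_split /= -scaler_suml -/X addrA -scalerDl subrK scale1r.
Qed.

Lemma subdiff_cvg_zb (z l : nat -> 'rV[R]_m) :
  z @ \oo --> zb -> l @ \oo --> lb ->
  (\forall n \near \oo, subdiff g (z n) (l n)) ->
  \forall n \near \oo, subdiff g zb (l n).
Proof.
move=> zzb llb zl; have [eps eps0 near_zb] := subdiff_near_zb.
have dz : (fun n => z n - zb) @ \oo --> (0 : 'rV[R]_m) by apply/subr_cvg0.
have lbdz : (fun n => dotv lb (z n - zb)) @ \oo --> (0 : R).
  by rewrite -(dotv0r lb); apply: cvg_dotv => //; exact: cvg_cst.
have ldz : (fun n => dotv (l n) (z n - zb)) @ \oo --> (0 : R).
  by rewrite -(dotv0r lb); exact: cvg_dotv.
near=> n; apply: (near_zb (z n - zb)).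
- by near: n; exact: cvgr0_norm_lt dz _ eps0.
- by near: n; exact: cvgr0_norm_lt lbdz _ eps0.
- by near: n; exact: cvgr0_norm_lt ldz _ eps0.
by rewrite subrKC; near: n.
Unshelve. all: by end_near. Qed.

Lemma ri_subdiff_ball : ri (subdiff g zb) lb -> exists2 e : R, 0 < e &
  forall mu, (mu <= V)%MS -> `|mu| < e -> subdiff g zb (lb + mu).
Proof.
move=> [_ [e [e0 ball_sub]]]; exists e => // mu muV mue; apply: ball_sub; split.
  by rewrite -ball_normE /ball_ /= opprD addNKr normrN.
by apply/aff_hull_subdiff_zbE; rewrite addrKl.
Qed.

Lemma subdiff_local_product : ri (subdiff g zb) lb -> exists2 d : R, 0 < d &
  forall w mu, `|w| < d -> `|mu| < d -> orthV w -> (mu <= V)%MS ->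
    subdiff g (zb + w) (lb + mu).
Proof.
move=> lb_ri; have [e e0 ball_sub] := ri_subdiff_ball lb_ri.
have [eps eps0 epi_near] := epi_of_epi_tangent.
pose C := \sum_(j < m) `|lb 0 j|; have C0 : 0 <= C by apply: sumr_ge0.
exists (Num.min e (eps / (C + 1))) => [|w mu].
  by rewrite lt_min e0 divr_gt0 //; lra.
rewrite !lt_min => /andP [_ wl] /andP [mue _] wV muV.
have [wl' lbw] : `|w| < eps /\ `|dotv lb w| < eps.
  move: wl; rewrite ltr_pdivlMr; last lra.
  by have := normr_dotv_le lb w; have := normr_ge0 w; rewrite -/C; split; nra.
have epi_w : (g (zb + w) <= (gz + dotv lb w)%:E)%E.
  by apply: epi_near => //; apply: epi_tangent_of_gen => r; rewrite wV.
have gw_fin : g (zb + w) \is a fin_num.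
  by move: epi_w (g_neqNy (zb + w)); case: (g (zb + w)).
have muw : dotv mu w = 0 by exact: dotv_sub_perp muV wV.
split=> // x; have [_ /(_ x)] := ball_sub _ muV mue; rewrite g_zbE.
rewrite -(fineK gw_fin); apply: le_trans.
move: epi_w; rewrite -(fineK gw_fin) -!EFinD !lee_fin.
by rewrite opprD addrA dotvBr (dotvDl lb mu w) muw addr0; lra.
Qed.

(* Monotonicity of subdiff g against the subgradients l +- s v r at zb. *)
Lemma orthV_of_subdiff_near (e : R) (z l : 'rV[R]_m) : 0 < e ->
  (forall mu, (mu <= V)%MS -> `|mu| < e -> subdiff g zb (lb + mu)) ->
  `|l - lb| < e / 2 -> (l - lb <= V)%MS -> subdiff g z l -> orthV (z - zb).
Proof.
move=> e0 ball_sub le2 lV zl r.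
have [th th0 th_small] := small_multiple `|v r| (divr_gt0 e0 (ltr0Sn _ 1)).
have mono s : `|s| <= th -> 0 <= - s * dotv (v r) (z - zb).
  move=> sth; have sV : ((l - lb + s *: v r)%R <= V)%MS.
    by apply: addmx_sub => //; apply: scalemx_sub; rewrite -rowV row_sub.
  have : `|l - lb + s *: v r| < e.
    apply: le_lt_trans (ler_normD _ _) _; rewrite normrZ.
    by have := th_small _ (normr_ge0 s) sth; lra.
  move=> /(ball_sub _ sV) /(subdiff_monotone zl).
  by rewrite addrA subrKC opprD addrA subrr add0r -scaleNr dotvZl.
have := mono th; have := mono (- th); rewrite normrN gtr0_norm //.
move=> /(_ (lexx _)); rewrite opprK pmulr_rge0 // => ge0.
move=> /(_ (lexx _)); rewrite mulNr oppr_ge0 pmulr_rle0 // => le0.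
by apply/eqP; rewrite eq_le le0 ge0.
Qed.

Lemma subdiff_cvg_local (z l : nat -> 'rV[R]_m) : ri (subdiff g zb) lb ->
  z @ \oo --> zb -> l @ \oo --> lb ->
  (\forall n \near \oo, subdiff g (z n) (l n)) ->
  \forall n \near \oo, orthV (z n - zb) /\ (l n - lb <= V)%MS.
Proof.
move=> lb_ri zzb llb zl; have [e e0 ball_sub] := ri_subdiff_ball lb_ri.
have l_zb := subdiff_cvg_zb zzb llb zl.
have dl : (fun n => l n - lb) @ \oo --> (0 : 'rV[R]_m) by apply/subr_cvg0.
have e2 : 0 < e / 2 by rewrite divr_gt0.
near=> n; have lV : (l n - lb <= V)%MS by apply: subdiff_zb_sub; near: n.
split=> //; apply: (orthV_of_subdiff_near e0 ball_sub _ lV).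
- by near: n; exact: cvgr0_norm_lt dl _ e2.
- by near: n.
Unshelve. all: by end_near. Qed.

Lemma tangent_gph_sub W : ri (subdiff g zb) lb ->
  tangent_cone (gph (subdiff g)) (row_mx zb lb) W ->
  orthV (lsubmx W) /\ (rsubmx W <= V)%MS.
Proof.
move=> lb_ri [t [Wn [t0 [t_0 [WnW gph_n]]]]].
pose z n := zb + t n *: lsubmx (Wn n); pose l n := lb + t n *: rsubmx (Wn n).
have zl : \forall n \near \oo, subdiff g (z n) (l n).
  by apply: nearW => n; have := gph_n n; rewrite /= row_mx_addZ gph_row_mx.
have local : \forall n \near \oo, orthV (z n - zb) /\ (l n - lb <= V)%MS.
  apply: subdiff_cvg_local zl => //; apply: cvg_add_scale_vanish t_0 _.
    exact: cvg_lsubmx WnW.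
  exact: cvg_rsubmx WnW.
split.
  move=> r; apply: (cvg_eq_near_cst (cvg_dotv (cvg_cst (v r)) (cvg_lsubmx WnW))).
  apply: filterS local => n [/(_ r) + _]; rewrite /z addrKl dotvZr.
  by move/eqP; rewrite mulf_eq0 gt_eqF //= => /eqP.
apply: sub_of_perp => w wV.
apply: (cvg_eq_near_cst (cvg_dotv (cvg_rsubmx WnW) (cvg_cst w))).
apply: filterS local => n [_ lV]; apply: (dotv_sub_perp _ wV).
by have := scalemx_sub (t n)^-1 lV; rewrite /l addrKl scalerA mulVf ?gt_eqF ?scale1r.
Qed.

Lemma tangent_gph_local : ri (subdiff g zb) lb -> exists2 d : R, 0 < d &
  forall z0 l0, `|z0 - zb| < d -> `|l0 - lb| < d ->
    orthV (z0 - zb) -> (l0 - lb <= V)%MS -> forall y nu, orthV y -> (nu <= V)%MS ->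
    tangent_cone (gph (subdiff g)) (row_mx z0 l0) (row_mx y nu).
Proof.
move=> lb_ri; have [d d0 product] := subdiff_local_product lb_ri.
have d2 : 0 < d / 2 by rewrite divr_gt0.
exists (d / 2) => // z0 l0 zd ld z0V l0V y nu yV nuV.
have [th th0 th_small] := small_multiple (`|y| + `|nu|) d2.
apply: (tangent_cone_segment th0) => t t0 tth.
rewrite row_mx_addZ row_mxKl row_mxKr gph_row_mx.
have small := th_small _ (ltW t0) tth.
have ny := normr_ge0 y; have nnu := normr_ge0 nu.
have := product (z0 - zb + t *: y) (l0 - lb + t *: nu).
rewrite (addrA zb) (addrA lb) !subrKC; apply.
- apply: le_lt_trans (ler_normD _ _) _; rewrite normrZ gtr0_norm //; nra.
- apply: le_lt_trans (ler_normD _ _) _; rewrite normrZ gtr0_norm //; nra.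
- by move=> r; rewrite dotvDr dotvZr z0V yV mulr0 addr0.
- by apply: addmx_sub => //; exact: scalemx_sub.
Qed.

Lemma tangent_gphE w u : ri (subdiff g zb) lb ->
  tangent_cone (gph (subdiff g)) (row_mx zb lb) (row_mx w u) <->
  orthV w /\ (u <= V)%MS.
Proof.
move=> lb_ri; split=> [/(tangent_gph_sub lb_ri)|[wV uV]].
  by rewrite row_mxKl row_mxKr.
have [d d0 tangent] := tangent_gph_local lb_ri.
apply: tangent; rewrite ?subrr ?normr0 ?sub0mx // => r.
by rewrite dotv0r.
Qed.

Lemma reg_normal_gph_near (x : nat -> 'rV[R]_(m + m)) : ri (subdiff g zb) lb ->
  (forall n, gph (subdiff g) (x n)) -> x @ \oo --> row_mx zb lb ->
  \forall n \near \oo, forall N y nu, reg_normal_cone (gph (subdiff g)) (x n) N ->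
    orthV y -> (nu <= V)%MS -> dotv N (row_mx y nu) = 0.
Proof.
move=> lb_ri x_gph xX; have [d d0 tangent] := tangent_gph_local lb_ri.
pose z n := lsubmx (x n); pose l n := rsubmx (x n).
have zzb : z @ \oo --> zb by rewrite -(row_mxKl zb lb); exact: cvg_lsubmx.
have llb : l @ \oo --> lb by rewrite -(row_mxKr zb lb); exact: cvg_rsubmx.
have local : \forall n \near \oo, orthV (z n - zb) /\ (l n - lb <= V)%MS.
  by apply: subdiff_cvg_local => //; apply: nearW => n; exact: x_gph.
have dz : (fun n => z n - zb) @ \oo --> (0 : 'rV[R]_m) by apply/subr_cvg0.
have dl : (fun n => l n - lb) @ \oo --> (0 : 'rV[R]_m) by apply/subr_cvg0.
near=> n => N y nu normal yV nuV.
have [zV lV] : orthV (z n - zb) /\ (l n - lb <= V)%MS by near: n.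
have zd : `|z n - zb| < d by near: n; exact: cvgr0_norm_lt dz _ d0.
have ld : `|l n - lb| < d by near: n; exact: cvgr0_norm_lt dl _ d0.
have := tangent _ _ zd ld zV lV; rewrite hsubmxK => tan.
apply: reg_normal_dotv_eq0 normal (tan _ _ yV nuV) _.
by rewrite opp_row_mx; apply: tan; [exact: orthVN | rewrite eqmx_opp].
Unshelve. all: by end_near. Qed.

Lemma lim_normal_gph_sub N : ri (subdiff g zb) lb ->
  lim_normal_cone (gph (subdiff g)) (row_mx zb lb) N ->
  (lsubmx N <= V)%MS /\ orthV (rsubmx N).
Proof.
move=> lb_ri [_ [x [Nn [x_gph [xX [NnN normal]]]]]].
have orth := reg_normal_gph_near lb_ri x_gph xX.
split.
  apply: sub_of_perp => y yV.
  apply: (cvg_eq_near_cst (cvg_dotv (cvg_lsubmx NnN) (cvg_cst y))).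
  apply: filterS orth => n /(_ _ y 0 (normal n) yV (sub0mx _ _)).
  by rewrite -[Nn n]hsubmxK dotv_row_mx row_mxKl dotv0r addr0.
move=> r; rewrite dotvC.
apply: (cvg_eq_near_cst (cvg_dotv (cvg_rsubmx NnN) (cvg_cst (v r)))).
apply: filterS orth => n /(_ _ 0 (v r) (normal n)).
rewrite -[Nn n]hsubmxK dotv_row_mx row_mxKr dotv0r add0r; apply.
  by move=> s; rewrite dotv0r.
by rewrite -rowV row_sub.
Qed.

Lemma lim_normal_gphE u w : ri (subdiff g zb) lb ->
  lim_normal_cone (gph (subdiff g)) (row_mx zb lb) (row_mx u w) <->
  (u <= V)%MS /\ orthV w.
Proof.
move=> lb_ri; split=> [/(lim_normal_gph_sub lb_ri)|[uV wV]].
  by rewrite row_mxKl row_mxKr.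
split; first by rewrite gph_row_mx.
exists (fun=> row_mx zb lb), (fun=> row_mx u w).
split; [|split; [exact: cvg_cst|split; [exact: cvg_cst|]]].
  by move=> _; rewrite gph_row_mx.
move=> _ W /(tangent_gph_sub lb_ri) [lW rV]; rewrite -[W]hsubmxK dotv_row_mx.
by rewrite (dotv_sub_perp uV lW) dotvC (dotv_sub_perp rV wV) addr0.
Qed.

Lemma graph_deriv_eq_coderiv_of_ri : ri (subdiff g zb) lb ->
  forall w, graph_deriv (subdiff g) zb lb w = coderiv (subdiff g) zb lb w.
Proof.
move=> lb_ri w; apply/seteqP; split=> u /=.
  move=> /(tangent_gphE _ _ lb_ri) [wV uV].
  by apply/(lim_normal_gphE _ _ lb_ri); split=> //; exact: orthVN.
move=> /(lim_normal_gphE _ _ lb_ri) [uV /orthVN]; rewrite opprK => wV.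
exact/(tangent_gphE _ _ lb_ri).
Qed.

Lemma coderiv0_opp_gen r : coderiv (subdiff g) zb lb 0 (- v r).
Proof.
have [t t0 gen_sub] := subdiff_zb_gen r.
pose s n := t * harmonic n.
have s0 n : 0 < s n by rewrite mulr_gt0 ?harmonic_gt0.
have l_sub n : subdiff g zb (lb + s n *: v r).
  apply: gen_sub; first exact: ltW.
  by rewrite ler_piMr ?(ltW t0) // /harmonic invf_le1 ?ler1n // ltr0Sn.
split; first by rewrite gph_row_mx.
exists (fun n => row_mx zb (lb + s n *: v r)), (fun=> row_mx (- v r) (- 0)).
split; [|split; [|split]].
- by move=> n; rewrite gph_row_mx.
- apply: cvg_row_mx; first exact: cvg_cst.
  rewrite -[X in _ --> X]addr0 -(scale0r (v r)).
  apply: cvgD; first exact: cvg_cst.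
  apply: cvgZ; last exact: cvg_cst.
  by rewrite -(mulr0 t); apply: cvgMl_tmp; exact: cvg_harmonic.
- exact: cvg_cst.
move=> n; have si0 : 0 <= (s n)^-1 by rewrite invr_ge0 ltW.
have := polarZ si0 (subdiff_reg_normal (l := lb + s n *: v r) lb_subdiff).
rewrite opprD addNKr scale_row_mx !scalerN scalerA mulVf ?gt_eqF //.
by rewrite scale1r oppr0 scaler0.
Qed.

Lemma graph_deriv0_conic u : graph_deriv (subdiff g) zb lb 0 u ->
  exists2 rho : 'I_k -> R, (forall s, 0 <= rho s) & u = \sum_(s < k) rho s *: v s.
Proof.
case: (farkas v u) => // -[y vy uy] [t [Wn [t0 [t_0 [WnW gph_n]]]]].
pose z n := zb + t n *: lsubmx (Wn n); pose l n := lb + t n *: rsubmx (Wn n).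
have l_zb : \forall n \near \oo, subdiff g zb (l n).
  apply: (@subdiff_cvg_zb z).
  - exact: cvg_add_scale_vanish t_0 (cvg_lsubmx WnW).
  - exact: cvg_add_scale_vanish t_0 (cvg_rsubmx WnW).
  by apply: nearW => n; have := gph_n n; rewrite /= row_mx_addZ gph_row_mx.
suff : dotv u y <= 0 by rewrite leNgt uy.
rewrite -(row_mxKr (0 : 'rV[R]_m) u).
apply: (cvgr_to_le (cvg_dotv (cvg_rsubmx WnW) (cvg_cst y))).
apply: filterS l_zb => n /subdiff_zb_dotv_le /(_ vy).
by rewrite /l dotvDl dotvZl gerDl pmulr_rle0.
Qed.

Lemma ri_of_conic_gen :
  (forall r, exists2 rho : 'I_k -> R, (forall s, 0 <= rho s) &
     - v r = \sum_(s < k) rho s *: v s) ->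
  ri (subdiff g zb) lb.
Proof.
move=> /conic_span_bounded [C C0 bounded].
pose Q := \sum_(s < k) `|q s|; have Q0 : 0 <= Q by apply: sumr_ge0.
have CQ1 : 0 < C * Q + 1 by have := mulr_ge0 C0 Q0; lra.
rewrite /ri /=; split=> //; exists (C * Q + 1)^-1; rewrite invr_gt0; split=> //.
move=> l [l_ball /aff_hull_subdiff_zbE lV].
have mue : `|l - lb| * (C * Q + 1) < 1.
  by move: l_ball; rewrite -ball_normE /ball_ /= distrC -[_^-1]mul1r ltr_pdivlMr.
have [sg sg_bd mu_sg] := bounded _ lV.
rewrite -[l](subrKC lb) mu_sg; apply: subdiff_zb_conic => [s|].
  by case: (sg_bd s).
apply: (@le_trans _ _ (C * `|l - lb| * Q)).
  rewrite /Q mulr_sumr; apply: ler_sum => s _.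
  by rewrite ler_wpM2r //; case: (sg_bd s).
have := normr_ge0 (l - lb); have := mulr_ge0 C0 Q0; nra.
Qed.

Lemma ri_subdiffP : ri (subdiff g zb) lb <->
  (forall w, graph_deriv (subdiff g) zb lb w = coderiv (subdiff g) zb lb w).
Proof.
split=> [|D_eq]; first exact: graph_deriv_eq_coderiv_of_ri.
apply: ri_of_conic_gen => r; apply: graph_deriv0_conic.
by rewrite D_eq; exact: coderiv0_opp_gen.
Qed.

End PolyhedralSubdifferential.

Lemma polyhedral_epigraphP (R : realType) m (g : 'rV[R]_m -> \bar R) :
  polyhedral_set (epigraph g) ->
  exists k (p : 'I_k -> 'rV[R]_m) (q b : 'I_k -> R), forall x t,
    (g x <= t%:E)%E <-> (forall i, dotv (p i) x + q i * t <= b i).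
Proof.
move=> [k [A [b epiE]]].
exists k, (fun i => lsubmx (row i A)), (fun i => A i (rshift m ord0)),
  (fun i => b i ord0) => x t.
have rowE i : \sum_(j < m + 1) A i j * row_mx x (const_mx t : 'rV[R]_1) 0 j =
    dotv (lsubmx (row i A)) x + A i (rshift m ord0) * t.
  rewrite big_split_ord big_ord1; congr (_ + _).
    by apply: eq_bigr => j _; rewrite row_mxEl !mxE.
  by rewrite row_mxEr !mxE.
have epi_xt : (g x <= t%:E)%E <-> epigraph g (row_mx x (const_mx t)).
  by rewrite /epigraph /= row_mxKl row_mxKr mxE.
apply: (iff_trans epi_xt); rewrite epiE /=.
by split=> ineqs i; [rewrite -rowE | rewrite rowE]; exact: ineqs.
Qed.

Unset Implicit Arguments.

Theorem corollary3p7 (R : realType) (m : nat) (g : 'rV[R]_m -> \bar R)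
    (zb lb : 'rV[R]_m) :
  polyhedral_fun g -> subdiff g zb lb ->
  (ri (subdiff g zb) lb <->
   (forall w : 'rV[R]_m,
      graph_deriv (subdiff g) zb lb w = coderiv (subdiff g) zb lb w)).
Proof.
move=> [[g_neqNy _] /polyhedral_epigraphP [k [p [q [b epiP]]]]] lb_sub.
exact: ri_subdiffP epiP g_neqNy lb_sub.
Qed.
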